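(* For the fully labeled one-dimensional rearrangement problem (LOR) on $m$ cells with a uniformly random initial permutation $\pi$, the expected total cost $T_{\mathrm{LOR}}(m)$ of the rearrangement plan computed by SweepCyclesLOR satisfies $$T_{\mathrm{LOR}}(m)\approx (m+H_m-2)\,c_p+\frac{m^2c_t}{3},$$ where $H_m=\sum_{i=1}^m 1/i$ is the $m$-th harmonic number: the expected number of pick-n-swaps is $m+H_m-2$ and the expected end-effector travel is $(1+o(1))\,m^2/3$ as $m\to\infty$.
   Context: Setting (LOR). A row of $m$ cells $1,\dots,m$, cell $i$ located at the point $i$ on the real line. Each cell initially holds exactly one item; items carry distinct labels $1,\dots,m$. An instance is a permutation $\pi$ of $\{1,\dots,m\}$, where $\pi_i$ is the label of the item initially in cell $i$; the goal is that item $i$ ends in cell $i$. A robot end-effector can hold at most one item; it starts at cell $1$ holding nothing. A pick-n-swap operation at a cell $p$: if holding nothing, pick up the item in $p$; if holding an item and $p$ contains an item, exchange the two; if holding an item and $p$ is empty, put the held item into $p$. A plan is a sequence $P=(p_0,p_1,\dots,p_N)$ of cells ($p_0=$ cell $1$) visited in order with a pick-n-swap at each of $p_1,\dots,p_N$, followed by a return to $p_{N+1}:=p_0$. Its total cost is $J_T(P)=Nc_p+\sum_{i=0}^{N}|p_i-p_{i+1}|\,c_t$ with constants $c_p,c_t>0$. SweepCyclesLOR: while some cell $i$ holds an item with label $\ne i$, let $i$ be the smallest such cell; go to $i$ and pick up its item, say with label $g$; while $g\neq i$, go to cell $g$ and swap (item $g$ is placed in cell $g$ and the item previously in cell $g$,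 with label $g'$, becomes held; set $g:=g'$); finally go to cell $i$ and place the held item. When done, return to cell $1$. *)

From HB Require Import structures.
From mathcomp Require Import all_boot all_order all_algebra all_fingroup.
From mathcomp Require Import all_classical all_reals all_analysis.
Set Implicit Arguments. Unset Strict Implicit. Unset Printing Implicit Defensive.
Import Order.TTheory GRing.Theory Num.Theory.

(* Cells and labels are the natural numbers 1..m. A configuration is a map
   [arr : nat -> nat] giving the label of the item in each cell. *)

Definition cdist (a b : nat) : nat := (a - b) + (b - a).

Definition upd (arr : nat -> nat) (c v : nat) : nat -> nat :=
  fun x => if x == c then v else arr x.

(* The robot holds the item with label [g];
   [i] is the cell where the current cycle started (now empty).
   While g <> i: go to cell g and swap (item g goes to cell g, the item
   previously there becomes held).
   Returns the visited cells (one pick-n-swap each) and the new configuration.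
   [fuel] only guarantees termination; fuel >= m is enough. *)
Fixpoint cycle_walk (fuel i g : nat) (arr : nat -> nat) : seq nat * (nat -> nat) :=
  match fuel with
  | 0 => ([::], arr)
  | f.+1 =>
    if g == i then ([:: i], upd arr i i)
    else let: (p, a) := cycle_walk f i (arr g) (upd arr g g) in (g :: p, a)
  end.

Definition first_misplaced (m : nat) (arr : nat -> nat) : option nat :=
  let k := find (fun c => arr c != c) (iota 1 m) in
  if k < m then Some k.+1 else None.

Fixpoint sweep (fuel m : nat) (arr : nat -> nat) : seq nat :=
  match fuel with
  | 0 => [::]
  | f.+1 =>
    match first_misplaced m arr with
    | None => [::]
    | Some i =>
      let: (p, a) := cycle_walk m i (arr i) arr in i :: p ++ sweep f m a
    end
  end.

(* Initial configuration of an instance pi : 'S_m (0-based internally):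
   cell c in 1..m holds the item with label (pi (c-1)) + 1. *)
Definition init_arr (m : nat) (pi : 'S_m) (c : nat) : nat :=
  if c is c'.+1 then
    match @insub nat (fun x => x < m) 'I_m c' with
    | Some j => (pi j).+1
    | None => c
    end
  else 0.

(* The plan (p_1, ..., p_N) computed by SweepCyclesLOR (p_0 = cell 1 implicit). *)
Definition sweep_plan (m : nat) (pi : 'S_m) : seq nat :=
  sweep m m (init_arr pi).

Definition n_picks (P : seq nat) : nat := size P.

Fixpoint path_len (x : nat) (s : seq nat) : nat :=
  if s is y :: s' then cdist x y + path_len y s' else 0.
Definition travel (P : seq nat) : nat := path_len 1 (rcons P 1).

Definition total_cost (R : realType) (cp ct : R) (P : seq nat) : R :=
  (n_picks P)%:R * cp + (travel P)%:R * ct.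

Definition Eperm (R : realType) (m : nat) (X : 'S_m -> R) : R :=
  (\sum_(s : 'S_m) X s) / (#|{perm 'I_m}|)%:R.

Definition harmonic_number (R : realType) (m : nat) : R :=
  \sum_(1 <= i < m.+1) (i%:R)^-1.

(* SweepCyclesLOR treats the nontrivial cycles of pi one at a time, in the
   order of their smallest cells: one pick at the smallest cell, then one
   pick-n-swap at every cell of the cycle, the last one closing it. Hence
   N = #(misplaced cells) + #(nontrivial cycles) = m + #cycles - 2 #fixed points,
   and for a uniform permutation E[#fixed points] = 1 while E[#cycles] = H_m
   (extending a permutation of 0..k-1 to 0..k creates a new cycle for exactly
   one of the k+1 choices of the preimage of k). Inside a cycle the robot
   travels exactly sum |x - pi x| over the cycle; between cycles it moves to
   the right, so the connecting moves and the final return add at most 2m.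
   Finally E[sum_x |x - pi x|] = (1/m) sum_(x,y) |x - y| = (m^2 - 1)/3. *)

From HB Require Import structures.
From mathcomp Require Import all_boot all_order all_algebra all_fingroup.
From mathcomp Require Import reals topology normedtype.
From mathcomp Require Import zify ring lra.
Import Order.TTheory GRing.Theory Num.Theory.

Set Implicit Arguments.
Unset Strict Implicit.
Unset Printing Implicit Defensive.

Lemma cycle_walk_ext f i g a1 a2 : a1 =1 a2 ->
  (cycle_walk f i g a1).1 = (cycle_walk f i g a2).1 /\
  (cycle_walk f i g a1).2 =1 (cycle_walk f i g a2).2.
Proof.
elim: f g a1 a2 => [|f IH] g a1 a2 e //=.
case: eqP => _; first by split => // x /=; rewrite /upd e.
have e' : upd a1 g g =1 upd a2 g g by move=> x; rewrite /upd e.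
have [h1 h2] := IH (a1 g) _ _ e'.
rewrite -(e g); move: h1 h2.
case: (cycle_walk f i (a1 g) (upd a1 g g)) => p1 b1.
by case: (cycle_walk f i (a1 g) (upd a2 g g)) => p2 b2 /= -> h2.
Qed.

Lemma first_misplaced_ext m a1 a2 : a1 =1 a2 ->
  first_misplaced m a1 = first_misplaced m a2.
Proof.
move=> e; rewrite /first_misplaced.
by rewrite (eq_find (a2 := fun c => a2 c != c)) // => c; rewrite e.
Qed.

Lemma sweep_ext f m a1 a2 : a1 =1 a2 -> sweep f m a1 = sweep f m a2.
Proof.
elim: f a1 a2 => [|f IH] a1 a2 e //=.
rewrite (first_misplaced_ext m e); case: (first_misplaced m a2) => [i|] //.
have [h1 h2] := cycle_walk_ext m i (a1 i) e.
rewrite -(e i); move: h1 h2.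
case: (cycle_walk m i (a1 i) a1) => p1 b1.
by case: (cycle_walk m i (a1 i) a2) => p2 b2 /= -> /IH ->.
Qed.

Lemma cdistC a b : cdist a b = cdist b a.
Proof. by rewrite /cdist addnC. Qed.

Lemma cdistSS a b : cdist a.+1 b.+1 = cdist a b.
Proof. by rewrite /cdist !subSS. Qed.

Lemma path_len_cat x s1 s2 :
  path_len x (s1 ++ s2) = path_len x s1 + path_len (last x s1) s2.
Proof. by elim: s1 x => [|y s IH] x //=; rewrite IH addnA. Qed.

Lemma path_len_traject (T : Type) (g : T -> nat) (f : T -> T) x n :
  path_len (g x) (map g (traject f (f x) n)) =
  \sum_(z <- traject f x n) cdist (g z) (g (f z)).
Proof. by elim: n x => [|n IH] x; rewrite ?big_nil //= IH big_cons. Qed.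

Lemma porbit_fixed (T : finType) (s : {perm T}) x y :
  s x = x -> y \in porbit s x -> y = x.
Proof. by move=> sx /porbitP [k ->]; rewrite permX; elim: k => //= k ->. Qed.

Lemma porbit_perm1 (T : finType) (s : {perm T}) x : porbit s (s x) = porbit s x.
Proof. by have := porbit_perm s 1 x; rewrite expg1. Qed.

Section Sweep.
Variables (m : nat) (s : {perm 'I_m}).
Implicit Types S : {set 'I_m}.

Definition cell (z : 'I_m) : nat := z.+1.

(* The row once the cells of [S] are sorted; item [x : 'I_m] belongs in cell [x.+1]. *)
Definition partial_arr S (c : nat) : nat :=
  if c is c'.+1 then
    if @insub nat (fun x => x < m) 'I_m c' is Some x then
      if x \in S then c else cell (s x)
    else c
  else 0.
Arguments partial_arr : simpl never.

Lemma partial_arr_cell S x :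
  partial_arr S (cell x) = if x \in S then cell x else cell (s x).
Proof. by rewrite /partial_arr /cell valK. Qed.

Lemma cellP c : (exists x, c = cell x) \/ (forall S, partial_arr S c = c).
Proof.
case: c => [|c]; first by right.
case: (ltnP c m) => h; first by left; exists (Ordinal h).
by right => S; rewrite /partial_arr insubN // -leqNgt.
Qed.

Lemma init_arr_partial : init_arr s =1 partial_arr set0.
Proof. by case=> [|c] //; rewrite /partial_arr /=; case: insub => //= j; rewrite inE. Qed.

Lemma upd_partial_arr S x :
  upd (partial_arr S) (cell x) (cell x) =1 partial_arr (x |: S).
Proof.
move=> c; case: (cellP c) => [[y ->]|out]; last by rewrite /upd !out; case: eqP.
rewrite /upd partial_arr_cell partial_arr_cell !inE /cell eqSS (inj_eq val_inj).
by case: eqP => [->|].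
Qed.

Lemma cycle_walk_traject (i0 : 'I_m) d : forall (S : {set 'I_m}) (y : 'I_m) f,
  d < f -> iter d s y = i0 -> uniq (traject s y d.+1) ->
  [disjoint traject s y d.+1 & S] ->
  (cycle_walk f (cell i0) (cell y) (partial_arr S)).1 = map cell (traject s y d.+1) /\
  (cycle_walk f (cell i0) (cell y) (partial_arr S)).2
    =1 partial_arr (S :|: [set z in traject s y d.+1]).
Proof.
elim: d => [|d IH] S y [|f] // lt_df.
  move=> /= -> _ _; rewrite eqxx; split => // c /=.
  rewrite upd_partial_arr; congr (partial_arr _ c).
  by apply/setP => z; rewrite !inE orbC.
rewrite trajectS disjoint_cons => yd /andP [y_tr uniq_tr] /andP [yS disj].
have y_i0 : (cell y == cell i0) = false.
  rewrite /cell eqSS (inj_eq val_inj); apply: contraNF y_tr => /eqP y_i0.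
  by rewrite {1}y_i0 -yd iterSr; apply/trajectP; exists d.
rewrite /= y_i0 partial_arr_cell (negbTE yS).
have [walk1 walk2] := cycle_walk_ext f (cell i0) (cell (s y)) (upd_partial_arr S y).
move: walk1 walk2.
case: (cycle_walk f (cell i0) (cell (s y)) (upd _ _ _)) => p a /= -> walk2.
have disj' : [disjoint traject s (s y) d.+1 & y |: S].
  rewrite disjoint_subset; apply/subsetP => z z_tr.
  rewrite !inE negb_or (disjointFr disj z_tr) andbT.
  by apply: contraNneq y_tr => z_y; rewrite -[X in X \in _]z_y.
have yd' : iter d s (s y) = i0 by rewrite -iterSr.
have [-> walk3] := IH (y |: S) (s y) f lt_df yd' uniq_tr disj'.
split => // c; rewrite walk2 walk3; congr (partial_arr _ c).
by apply/setP => z; rewrite !inE; case: (z \in S); rewrite ?orbT ?orbF.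
Qed.

Definition misplaced S z := (z \notin S) && (s z != z).
Definition cycle_min z := [forall y in porbit s z, z <= y].
Definition n_misplaced S := #|[set z | misplaced S z]|.
Definition n_open_cycles S := #|[set z | misplaced S z && cycle_min z]|.
Definition displacement S := \sum_(z | z \notin S) cdist z (s z).

Lemma partial_arr_misplaced S z : (partial_arr S (cell z) != cell z) = misplaced S z.
Proof.
rewrite partial_arr_cell /misplaced; case: ifP => _; first by rewrite eqxx.
by rewrite /cell eqSS (inj_eq val_inj).
Qed.

Lemma cell_iota c : c \in iota 1 m -> exists z, c = cell z.
Proof.
rewrite mem_iota => /andP [c_gt0 c_le]; have c_lt : c.-1 < m by lia.
by exists (Ordinal c_lt); rewrite /cell /= prednK.
Qed.

Lemma first_misplaced_none S :
  (forall z, ~~ misplaced S z) -> first_misplaced m (partial_arr S) = None.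
Proof.
move=> none; rewrite /first_misplaced hasNfind ?size_iota ?ltnn //.
apply/hasPn => c /cell_iota [z ->]; by rewrite partial_arr_misplaced.
Qed.

Lemma first_misplaced_min S i0 : misplaced S i0 ->
  (forall z, misplaced S z -> i0 <= z) ->
  first_misplaced m (partial_arr S) = Some (cell i0).
Proof.
move=> i0_mis i0_min; rewrite /first_misplaced.
have -> : iota 1 m = iota 1 i0 ++ cell i0 :: iota (cell i0).+1 (m - cell i0).
  rewrite -[_ :: _]/(iota (1 + i0) _.+1) -iotaD; congr iota.
  by have := ltn_ord i0; rewrite /cell; lia.
rewrite find_cat; have -> : has (fun c => partial_arr S c != c) (iota 1 i0) = false.
  apply/negbTE/hasPn => c c_in; have [z c_z] : exists z, c = cell z.
    by apply: cell_iota; move: c_in; rewrite !mem_iota; have := ltn_ord i0; lia.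
  rewrite c_z partial_arr_misplaced; apply/negP => /i0_min.
  by move: c_in; rewrite c_z mem_iota /cell; lia.
by rewrite size_iota /= partial_arr_misplaced i0_mis addn0 ltn_ord.
Qed.

Lemma misplaced_orbit S i0 y : fclosed s S -> misplaced S i0 ->
  y \in porbit s i0 -> misplaced S y.
Proof.
move=> clS /andP [i0S si0] y_O; apply/andP; split.
  case/porbitP: y_O => k ->; rewrite permX.
  by elim: k => //= k IH; rewrite -(fclosed1 clS).
apply: contra si0 => /eqP sy; rewrite porbit_sym in y_O.
by rewrite (porbit_fixed sy y_O) sy.
Qed.

Lemma fclosedU_porbit S x : fclosed s S -> fclosed s (S :|: porbit s x).
Proof.
move=> clS y _ /eqP <-; rewrite !inE -(fclosed1 clS); congr (_ || _).
by rewrite !(porbit_sym _ _ x) porbit_perm1.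
Qed.

Section Round.
Variables (S : {set 'I_m}) (i0 : 'I_m).
Hypotheses (clS : fclosed s S) (i0_mis : misplaced S i0).
Hypothesis i0_min : forall z, misplaced S z -> i0 <= z.
Let O := porbit s i0.

Lemma n_misplaced_round : n_misplaced S = n_misplaced (S :|: O) + #|O|.
Proof.
rewrite /n_misplaced -(cardsID O [set z | misplaced S z]) addnC; congr (_ + _).
  by apply: eq_card => z; rewrite !inE /misplaced !inE negb_or andbCA !andbA.
rewrite (setIidPr _) //; apply/subsetP => z z_O; rewrite inE.
exact: misplaced_orbit z_O.
Qed.

Lemma cycle_min_i0 : cycle_min i0.
Proof. by apply/forall_inP => y y_O; apply: i0_min; apply: misplaced_orbit y_O. Qed.

Lemma n_open_cycles_round : n_open_cycles S = n_open_cycles (S :|: O) + 1.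
Proof.
rewrite /n_open_cycles -(cardsID O [set z | misplaced S z && cycle_min z]) addnC.
congr (_ + _).
  by apply: eq_card => z; rewrite !inE /misplaced !inE negb_or !andbA (andbC (z \notin O)).
rewrite -(cards1 i0); apply: eq_card => z; rewrite !inE.
apply/idP/eqP => [/andP [/andP [z_mis z_min] z_O] | ->]; last first.
  by rewrite i0_mis cycle_min_i0 porbit_id.
apply/val_inj/eqP; rewrite eqn_leq i0_min // andbT.
by move/forall_inP: z_min; apply; rewrite porbit_sym.
Qed.

Lemma displacement_round :
  displacement S = \sum_(z in O) cdist z (s z) + displacement (S :|: O).
Proof.
rewrite /displacement (bigID (mem O)) /=; congr (_ + _).
  apply: eq_bigl => z; case: (boolP (z \in O)) => z_O; last by rewrite andbF.
  by have /andP [-> _] := misplaced_orbit clS i0_mis z_O.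
by apply: eq_bigl => z; rewrite !inE negb_or.
Qed.

Lemma traject_porbit : traject s (s i0) #|O| =i O.
Proof. by move=> z; rewrite /O -(porbit_perm1 s i0) porbit_traject. Qed.

Lemma sweep_round f : sweep f.+1 m (partial_arr S) =
  cell i0 :: map cell (traject s (s i0) #|O|) ++ sweep f m (partial_arr (S :|: O)).
Proof.
have O_gt0 : 0 < #|O| by rewrite lt0n card_porbit_neq0.
have O_le : #|O| <= m by have := max_card (mem O); rewrite card_ord.
have [i0S _] := andP i0_mis.
rewrite /= (first_misplaced_min i0_mis i0_min) partial_arr_cell (negbTE i0S).
have [|||| walk1 walk2] := @cycle_walk_traject i0 #|O|.-1 S (s i0) m.
- by rewrite prednK.
- by rewrite -iterSr prednK // iter_porbit.
- by rewrite prednK // /O -(porbit_perm1 s i0) uniq_traject_porbit.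
- rewrite prednK // disjoint_subset; apply/subsetP => z; rewrite traject_porbit => z_O.
  by have /andP [] := misplaced_orbit clS i0_mis z_O.
rewrite prednK // in walk1 walk2; move: walk1 walk2.
case: (cycle_walk m _ _ _) => p a /= -> walk2; congr (_ :: _ ++ _).
apply: sweep_ext => c; rewrite walk2; congr (partial_arr _ c).
by apply/setP => z; rewrite !inE traject_porbit.
Qed.

Lemma path_len_round :
  path_len (cell i0) (map cell (traject s (s i0) #|O|)) = \sum_(z in O) cdist z (s z).
Proof.
rewrite path_len_traject big_uniq ?uniq_traject_porbit //.
under eq_bigr do rewrite cdistSS.
by apply: eq_bigl => z; rewrite -porbit_traject.
Qed.

Lemma path_len_sweep_round f y :
  path_len y (rcons (sweep f.+1 m (partial_arr S)) 1) =
  cdist y (cell i0) + \sum_(z in O) cdist z (s z) +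
  path_len (cell i0) (rcons (sweep f m (partial_arr (S :|: O))) 1).
Proof.
rewrite sweep_round rcons_cons /= rcons_cat path_len_cat path_len_round.
by rewrite last_map last_traject iter_porbit addnA.
Qed.

End Round.

Lemma sweep_ind (P : nat -> {set 'I_m} -> Prop) :
  (forall f S, (forall z, ~~ misplaced S z) -> P f S) ->
  (forall f S i0, fclosed s S -> misplaced S i0 ->
     (forall z, misplaced S z -> i0 <= z) -> P f (S :|: porbit s i0) -> P f.+1 S) ->
  forall f S, fclosed s S -> n_open_cycles S <= f -> P f S.
Proof.
move=> P_done P_round; elim=> [|f IH] S clS le_f.
all: case: (pickP (misplaced S)) => [z z_mis | none]; last first.
all: try by apply: P_done => z; rewrite none.
all: case: (arg_minnP (fun z : 'I_m => z : nat) z_mis) => i0 i0_mis i0_min.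
all: rewrite (n_open_cycles_round clS i0_mis i0_min) addn1 in le_f => //.
apply: P_round i0_mis i0_min _ => //.
exact: IH (fclosedU_porbit _ clS) le_f.
Qed.

Section Sorted.
Variable S : {set 'I_m}.
Hypothesis none : forall z, ~~ misplaced S z.

Lemma sweep_sorted f : sweep f m (partial_arr S) = [::].
Proof. by case: f => //= f; rewrite first_misplaced_none. Qed.

Lemma n_misplaced_sorted : n_misplaced S = 0.
Proof. by apply/eqP; rewrite cards_eq0; apply/eqP/setP => z; rewrite !inE (negbTE (none z)). Qed.

Lemma n_open_cycles_sorted : n_open_cycles S = 0.
Proof. by apply/eqP; rewrite cards_eq0; apply/eqP/setP => z; rewrite !inE (negbTE (none z)). Qed.

Lemma displacement_sorted : displacement S = 0.
Proof.
apply: big1 => z zS; have := none z; rewrite /misplaced zS negbK => /eqP ->.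
by rewrite /cdist subnn.
Qed.

End Sorted.

Lemma size_sweep f S : fclosed s S -> n_open_cycles S <= f ->
  size (sweep f m (partial_arr S)) = n_misplaced S + n_open_cycles S.
Proof.
move: f S; apply: sweep_ind => [f S none | f S i0 clS i0_mis i0_min IH].
  by rewrite sweep_sorted ?n_misplaced_sorted ?n_open_cycles_sorted.
rewrite (sweep_round clS i0_mis i0_min) /= size_cat size_map size_traject IH.
rewrite (n_misplaced_round clS i0_mis) (n_open_cycles_round clS i0_mis i0_min).
by rewrite addn1 addnS addnA (addnC (n_misplaced _)).
Qed.

Lemma sweep_travel_ge f S : fclosed s S -> n_open_cycles S <= f ->
  forall y, displacement S <= path_len y (rcons (sweep f m (partial_arr S)) 1).
Proof.
move: f S; apply: sweep_ind => [f S none | f S i0 clS i0_mis i0_min IH] y.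
  by rewrite displacement_sorted.
rewrite (path_len_sweep_round clS i0_mis i0_min) (displacement_round clS i0_mis).
rewrite (addnC (cdist _ _)) -addnA leq_add2l.
exact: leq_trans (IH (cell i0)) (leq_addl _ _).
Qed.

Lemma sweep_travel_le f S : fclosed s S -> n_open_cycles S <= f ->
  forall y, 0 < y <= m -> (forall z, misplaced S z -> y <= cell z) ->
  path_len y (rcons (sweep f m (partial_arr S)) 1) <= displacement S + 2 * m - y.
Proof.
move: f S; apply: sweep_ind => [f S none | f S i0 clS i0_mis i0_min IH] y y_m y_min.
  by rewrite sweep_sorted //= (displacement_sorted none) /cdist; lia.
rewrite (path_len_sweep_round clS i0_mis i0_min) (displacement_round clS i0_mis).
have y_i0 := y_min _ i0_mis.
have i0_m : 0 < cell i0 <= m by rewrite /cell ltn_ord.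
have i0_first : forall z, misplaced (S :|: porbit s i0) z -> cell i0 <= cell z.
  move=> z /andP [zS' sz]; rewrite /cell ltnS; apply: i0_min.
  by rewrite /misplaced sz andbT; move: zS'; rewrite inE negb_or => /andP [].
have rest := IH _ i0_m i0_first.
by move: rest y_i0 i0_m; rewrite /cdist /cell; lia.
Qed.

Definition n_fixed := #|[set z | s z == z]|.

Lemma n_misplaced0 : n_misplaced set0 + n_fixed = m.
Proof.
rewrite /n_misplaced /n_fixed -cardsUI.
have -> : [set z | misplaced set0 z] :&: [set z | s z == z] = set0.
  by apply/setP => z; rewrite !inE /misplaced inE /=; case: eqP.
have -> : [set z | misplaced set0 z] :|: [set z | s z == z] = setT.
  by apply/setP => z; rewrite !inE /misplaced inE /=; case: eqP.
by rewrite cards0 addn0 cardsT card_ord.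
Qed.

Lemma card_porbits_min : #|porbits s| = #|[set z | cycle_min z]|.
Proof.
have -> : porbits s = porbit s @: [set z | cycle_min z].
  apply/setP => O; apply/imsetP/imsetP => [[x _ ->]|[r _ ->]]; last by exists r.
  case: (arg_minnP (fun z : 'I_m => z : nat) (porbit_id s x)) => r r_x r_min.
  have O_r : porbit s r = porbit s x by apply/eqP; rewrite eq_porbit_mem.
  exists r; last by rewrite O_r.
  by rewrite inE; apply/forall_inP => y; rewrite O_r; apply: r_min.
rewrite card_in_imset // => r1 r2; rewrite !inE => /forall_inP min1 /forall_inP min2 O12.
apply/val_inj/eqP; rewrite eqn_leq min1 ?min2 // -?O12 ?porbit_id //.
by rewrite O12 porbit_id.
Qed.

Lemma n_open_cycles0 : n_open_cycles set0 + n_fixed = #|porbits s|.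
Proof.
rewrite card_porbits_min /n_open_cycles /n_fixed.
rewrite -(cardsID [set z | s z == z] [set z | cycle_min z]) addnC.
congr (_ + _); apply: eq_card => z; rewrite !inE; last by rewrite /misplaced inE andbC.
case: (boolP (s z == z)) => [/eqP sz|]; rewrite ?andbF ?andbT //.
by apply/esym/forall_inP => y /(porbit_fixed sz) ->.
Qed.

Lemma displacement0 : displacement set0 = \sum_(z : 'I_m) cdist z (s z).
Proof. by apply: eq_bigl => z; rewrite inE. Qed.

Lemma fclosed0 : fclosed s set0.
Proof. by move=> x y _; rewrite !inE. Qed.

Lemma n_open_cycles_le S : n_open_cycles S <= m.
Proof. by rewrite -[leqRHS](card_ord m) max_card. Qed.

Lemma sweep_plan_partial : sweep_plan s = sweep m m (partial_arr set0).
Proof. exact: sweep_ext init_arr_partial. Qed.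

Lemma size_sweep_plan : size (sweep_plan s) + 2 * n_fixed = m + #|porbits s|.
Proof.
rewrite sweep_plan_partial (size_sweep fclosed0 (n_open_cycles_le _)).
by have := n_misplaced0; have := n_open_cycles0; lia.
Qed.

Lemma travel_sweep_plan : 0 < m ->
  \sum_(z : 'I_m) cdist z (s z) <= travel (sweep_plan s)
    <= \sum_(z : 'I_m) cdist z (s z) + 2 * m.
Proof.
move=> m_gt0; rewrite /travel sweep_plan_partial -displacement0.
rewrite (sweep_travel_ge fclosed0 (n_open_cycles_le _)) /=.
apply: leq_trans (leq_subr 1 _).
by apply: sweep_travel_le fclosed0 (n_open_cycles_le _) 1 _ _; rewrite ?m_gt0.
Qed.

End Sweep.

Section PermSums.
Variable T : finType.

Lemma sum_perm_at (G : T -> nat) x x' :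
  \sum_(s : {perm T}) G (s x) = \sum_(s : {perm T}) G (s x').
Proof.
rewrite [RHS](reindex_inj (mulgI (tperm x' x))) /=.
by apply: eq_bigr => s _; rewrite permM tpermL.
Qed.

Lemma sum_perm_app (G : T -> nat) x :
  (\sum_(s : {perm T}) G (s x)) * #|T| = #|{perm T}| * \sum_y G y.
Proof.
transitivity (\sum_(x' : T) \sum_(s : {perm T}) G (s x')).
  rewrite [RHS](eq_bigr (fun _ => \sum_(s : {perm T}) G (s x))) => [|x' _].
    by rewrite sum_nat_const mulnC.
  exact: sum_perm_at.
rewrite exchange_big /= -sum_nat_const; apply: eq_bigr => s _.
by rewrite [RHS](reindex_inj (@perm_inj _ s)).
Qed.

Lemma sum_perm_graph (F : T -> T -> nat) :
  (\sum_(s : {perm T}) \sum_x F x (s x)) * #|T| = #|{perm T}| * \sum_x \sum_y F x y.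
Proof.
rewrite exchange_big big_distrl big_distrr /=; apply: eq_bigr => x _.
exact: sum_perm_app.
Qed.

Lemma sum_card_fixed : 0 < #|T| ->
  \sum_(s : {perm T}) #|[set x | s x == x]| = #|{perm T}|.
Proof.
move=> T_gt0; apply/eqP; rewrite -(eqn_pmul2r T_gt0); apply/eqP.
have card_fix (s : {perm T}) : #|[set x | s x == x]| = \sum_x (x == s x).
  by rewrite -sum1_card big_mkcond; apply: eq_bigr => x _; rewrite inE eq_sym.
rewrite (eq_bigr _ (fun s _ => card_fix s)) (sum_perm_graph (fun x y => (x == y) : nat)).
congr (_ * _).
rewrite -sum1_card; apply: eq_bigr => x _.
by rewrite (bigD1 x) //= eqxx big1 // => y /negbTE; rewrite eq_sym => ->.
Qed.

End PermSums.

Section CycleCount.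
Variable m : nat.

Definition below (k : nat) : {set 'I_m} := [set x : 'I_m | x < k].

Lemma card_below k : k <= m -> #|below k| = k.
Proof.
move=> le_km; have widen_inj : injective (widen_ord le_km) by move=> a b [] /val_inj.
rewrite -[RHS](card_ord k) -(card_imset _ widen_inj); apply: eq_card => x; rewrite inE.
apply/idP/imsetP => [x_lt | [i _ ->]] /=; last exact: ltn_ord.
by exists (Ordinal x_lt); last exact: val_inj.
Qed.

Lemma below_succ_on (r : {perm 'I_m}) (k : 'I_m) :
  perm_on (below k.+1) r -> r k = k -> perm_on (below k) r.
Proof.
move=> /subsetP r_on rk; apply/subsetP => x rx; have := r_on x rx.
rewrite !inE ltnS leq_eqVlt => /orP [/eqP/val_inj x_k | //].
by move: rx; rewrite inE x_k rk eqxx.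
Qed.

(* [s] factors uniquely as [tperm k j * r] with [r k = k], namely for [j = s^-1 k]. *)
Lemma sum_perm_on_below_succ (k : 'I_m) (F : {perm 'I_m} -> nat) :
  \sum_(s | perm_on (below k.+1) s) F s =
  \sum_(j in below k.+1) \sum_(r | perm_on (below k) r) F (tperm k j * r)%g.
Proof.
have k_in : k \in below k.+1 by rewrite inE.
rewrite (partition_big (fun s : {perm 'I_m} => (s^-1)%g k) (mem (below k.+1))) /=; last first.
  by move=> s s_on; rewrite perm_closed ?perm_onV.
apply: eq_bigr => j j_in; rewrite (reindex_inj (@mulgI _ (tperm k j))) /=.
apply: eq_bigl => r.
have -> : (((tperm k j * r)^-1)%g k == j) = (r k == k).
  by rewrite -(inj_eq (@perm_inj _ (tperm k j * r)%g)) permKV permM tpermR eq_sym.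
have t_on : perm_on (below k.+1) (tperm k j).
  apply: subset_trans (tperm_on k j) _; apply/subsetP => x.
  by rewrite inE in j_in; rewrite !inE => /orP [] /eqP ->.
apply/andP/idP => [[tr_on /eqP rk] | r_on].
  by apply: below_succ_on rk; rewrite -(tpermKg k j r); apply: perm_onM.
split; last by rewrite (out_perm r_on) // inE ltnn.
apply: perm_onM t_on (subset_trans r_on _).
by apply/subsetP => x; rewrite !inE ltnS => /ltnW.
Qed.

Definition sum_cycles k := \sum_(s | perm_on (below k) s) #|porbits s|.

Lemma card_perm_on_below k : k <= m -> #|perm_on (below k)| = k`!.
Proof. by move=> le_km; rewrite card_perm card_below. Qed.

Lemma sum_cycles_succ (k : 'I_m) : sum_cycles k.+1 + k * k`! = k.+1 * sum_cycles k.
Proof.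
have k_le : k <= m := ltnW (ltn_ord k).
(* [r] fixes [k], so composing with [tperm k j] merges [k] into the cycle of [j]. *)
have merge j r : j \in below k -> perm_on (below k) r ->
    #|porbits (tperm k j * r)%g| + 1 = #|porbits r|.
  rewrite inE => j_lt r_on; have := porbits_mul_tperm r k j.
  have k_j : k != j by apply: contraTneq j_lt => <-; rewrite ltnn.
  have -> : k \notin porbit r j.
    rewrite porbit_sym; apply: contra k_j => /(porbit_fixed (out_perm r_on _)).
    by rewrite inE ltnn => /(_ isT) ->.
  by rewrite k_j /= -addnn addnA => /eqP; rewrite eqn_add2r => /eqP.
have sum_j j : j \in below k ->
    \sum_(r | perm_on (below k) r) #|porbits (tperm k j * r)%g| + k`! = sum_cycles k.
  move=> j_in; rewrite -(card_perm_on_below k_le) -sum1_card -big_split /=.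
  by apply: eq_bigr => r r_on; apply: merge.
rewrite /sum_cycles sum_perm_on_below_succ (bigD1 k) ?inE //= tperm1.
under eq_bigr do rewrite mul1g.
rewrite (eq_bigl (fun j => j \in below k)) => [|j]; last first.
  by rewrite !inE ltnS ltn_neqAle andbC.
rewrite -addnA -[X in X * k`!](card_below k_le) -sum_nat_const -big_split /=.
by rewrite (eq_bigr _ sum_j) sum_nat_const card_below // mulSn.
Qed.

Lemma sum_cycles0 : sum_cycles 0 = m.
Proof.
have porbit1 (x : 'I_m) : porbit 1 x = [set x].
  apply/setP => y; rewrite inE; apply/idP/eqP => [|->]; last exact: porbit_id.
  exact: porbit_fixed (perm1 x).
rewrite /sum_cycles (eq_bigl (pred1 1%g)) => [|s]; last first.
  apply/idP/eqP => [s_on | ->]; last exact: perm_on1.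
  by apply: perm_on_id s_on _; rewrite card_below.
rewrite big_pred1_eq /porbits card_in_imset ?card_ord // => x y _ _.
by rewrite !porbit1 => /set1_inj.
Qed.

Lemma sum_cycles_all : sum_cycles m = \sum_(s : {perm 'I_m}) #|porbits s|.
Proof. by apply: eq_bigl => s; apply/subsetP => x _; rewrite inE ltn_ord. Qed.

End CycleCount.

Lemma sum_cdist_last n : 2 * \sum_(0 <= x < n) cdist x n = n * n.+1.
Proof.
elim: n => [|n IH]; first by rewrite big_geq.
rewrite big_nat_recr //= (eq_big_nat _ _ (F2 := fun x => cdist x n + 1)); last first.
  by move=> x /andP [_ x_lt]; rewrite /cdist; lia.
rewrite big_split /= sum_nat_const_nat subn0 !mulnDr IH /cdist; lia.
Qed.

Lemma sum_cdist_square n :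
  3 * \sum_(0 <= x < n) \sum_(0 <= y < n) cdist x y = n.-1 * n * n.+1.
Proof.
elim: n => [|n IH]; first by rewrite big_geq.
rewrite big_nat_recr //=.
rewrite (eq_big_nat _ _ (F2 := fun x => \sum_(0 <= y < n) cdist x y + cdist x n)).
  2: by move=> x _; rewrite big_nat_recr.
rewrite big_split /= big_nat_recr //= [cdist n n]/cdist subnn addn0.
have -> : \sum_(0 <= y < n) cdist n y = \sum_(0 <= y < n) cdist y n.
  by apply: eq_bigr => y _; exact: cdistC.
have := sum_cdist_last n; move: IH.
set A := \sum_(0 <= i < n) _; set B := \sum_(0 <= i < n) _.
by case: n {A B} (A) (B) => [|n] A B /=; nia.
Qed.

Lemma sum_displacement m : 0 < m ->
  3 * \sum_(s : {perm 'I_m}) \sum_(z : 'I_m) cdist z (s z)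
    = #|{perm 'I_m}| * (m.-1 * m.+1).
Proof.
move=> m_gt0.
have pairs : 3 * \sum_(x < m) \sum_(y < m) cdist x y = m.-1 * m * m.+1.
  rewrite -sum_cdist_square big_mkord; congr (3 * _).
  by apply: eq_bigr => x _; rewrite big_mkord.
have := sum_perm_graph (fun x y : 'I_m => cdist x y); rewrite card_ord; move: pairs.
move: (\sum_(s : {perm 'I_m}) _) (\sum_(x < m) _) #|{perm 'I_m}| => S D N pairs graph.
apply/eqP; rewrite -(eqn_pmul2r m_gt0); apply/eqP; nia.
Qed.

Section Expectation.
Variables (R : realType) (m : nat).
Implicit Types X Y : 'S_m -> R.
Local Open Scope ring_scope.

Lemma card_perm_neq0 : (#|{perm 'I_m}|%:R : R) != 0.
Proof. by rewrite card_Sn pnatr_eq0 -lt0n fact_gt0. Qed.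

Lemma eq_Eperm X Y : X =1 Y -> Eperm X = Eperm Y.
Proof. by move=> XY; rewrite /Eperm (eq_bigr _ (fun s _ => XY s)). Qed.

Lemma EpermD X Y : Eperm (fun s => X s + Y s) = Eperm X + Eperm Y.
Proof. by rewrite /Eperm big_split mulrDl. Qed.

Lemma EpermB X Y : Eperm (fun s => X s - Y s) = Eperm X - Eperm Y.
Proof. by rewrite /Eperm sumrB mulrBl. Qed.

Lemma EpermMr X a : Eperm (fun s => X s * a) = Eperm X * a.
Proof. by rewrite /Eperm -mulr_suml mulrAC. Qed.

Lemma Eperm_cst (c : R) : Eperm (fun _ : 'S_m => c) = c.
Proof.
rewrite /Eperm sumr_const -[c *+ _]mulr_natr (eq_card (B := {perm 'I_m})) //.
by rewrite mulfK ?card_perm_neq0.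
Qed.

Lemma ler_Eperm X Y : (forall s, X s <= Y s) -> Eperm X <= Eperm Y.
Proof. by move=> XY; rewrite ler_wpM2r ?invr_ge0 ?ler0n // ler_sum. Qed.

Lemma harmonic_numberS k : harmonic_number R k.+1 = harmonic_number R k + k.+1%:R^-1.
Proof. by rewrite /harmonic_number big_nat_recr. Qed.

Lemma sum_cycles_closed k : (k <= m)%N ->
  (sum_cycles m k)%:R = k`!%:R * (m%:R - k%:R + harmonic_number R k) :> R.
Proof.
elim: k => [|k IH] k_le.
  by rewrite sum_cycles0 fact0 mul1r subr0 /harmonic_number big_geq // addr0.
have succ : (sum_cycles m k.+1 + k * k`!)%:R = (k.+1 * sum_cycles m k)%:R :> R.
  exact: congr1 _ (sum_cycles_succ (Ordinal k_le)).
rewrite natrD !natrM IH ?(ltnW k_le) // in succ.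
rewrite factS natrM harmonic_numberS -(addrK (k%:R * k`!%:R) (sum_cycles _ _)%:R) succ.
have k1_neq0 : k%:R + 1 != 0 :> R by rewrite natr1 pnatr_eq0.
rewrite -natr1; move: k1_neq0; move: (k%:R : R) (k`!%:R : R) (harmonic_number R k).
by move=> x f h x1_neq0; field.
Qed.

Lemma expected_n_cycles :
  Eperm (fun s : 'S_m => #|porbits s|%:R : R) = harmonic_number R m.
Proof.
rewrite /Eperm -natr_sum -sum_cycles_all sum_cycles_closed // subrr add0r card_Sn.
by rewrite mulrC mulKf // pnatr_eq0 -lt0n fact_gt0.
Qed.

Lemma expected_n_fixed : (0 < m)%N -> Eperm (fun s : 'S_m => (n_fixed s)%:R : R) = 1.
Proof.
by move=> m_gt0; rewrite /Eperm -natr_sum sum_card_fixed ?card_ord // divff ?card_perm_neq0.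
Qed.

Lemma expected_n_picks : (0 < m)%N ->
  Eperm (fun s : 'S_m => (n_picks (sweep_plan s))%:R : R) = m%:R + harmonic_number R m - 2.
Proof.
move=> m_gt0.
have picks (s : 'S_m) :
    (n_picks (sweep_plan s))%:R = m%:R + #|porbits s|%:R - (n_fixed s)%:R * 2 :> R.
  have /eqP := size_sweep_plan s.
  by rewrite -(eqr_nat R) natrD natrM natrD (mulrC 2%:R) => /eqP <-; rewrite addrK.
rewrite (eq_Eperm picks) EpermB EpermD EpermMr Eperm_cst.
by rewrite expected_n_cycles expected_n_fixed // mul1r.
Qed.

Lemma expected_displacement : (0 < m)%N ->
  Eperm (fun s : 'S_m => (\sum_(z : 'I_m) cdist z (s z))%:R : R) = (m%:R ^+ 2 - 1) / 3.
Proof.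
move=> m_gt0; have /eqP := sum_displacement m_gt0.
rewrite -(eqr_nat R) !natrM -subn1 natrB // -[m.+1%:R]natr1 => /eqP sum_disp.
rewrite /Eperm -natr_sum; apply: (canLR (mulfK card_perm_neq0)).
apply: (mulfI (_ : 3 != 0 :> R)); first by rewrite pnatr_eq0.
by rewrite sum_disp; field.
Qed.

Lemma expected_travel_near : (0 < m)%N ->
  `|Eperm (fun s : 'S_m => (travel (sweep_plan s))%:R : R) - m%:R ^+ 2 / 3| <= 2 * m%:R.
Proof.
move=> m_gt0; set D := fun s : 'S_m => (\sum_(z : 'I_m) cdist z (s z))%:R : R.
have lo : Eperm D <= Eperm (fun s : 'S_m => (travel (sweep_plan s))%:R : R).
  by apply: ler_Eperm => s; rewrite ler_nat; case/andP: (travel_sweep_plan s m_gt0).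
have hi : Eperm (fun s : 'S_m => (travel (sweep_plan s))%:R : R) <= Eperm D + 2 * m%:R.
  rewrite -[2 * _]Eperm_cst -EpermD; apply: ler_Eperm => s.
  by rewrite -natrM -natrD ler_nat; case/andP: (travel_sweep_plan s m_gt0).
have m_ge1 : 1 <= m%:R :> R by rewrite ler1n.
rewrite expected_displacement // in lo hi; rewrite ler_norml; apply/andP; split; lra.
Qed.

End Expectation.

Local Open Scope classical_set_scope.
Local Open Scope ring_scope.
Import numFieldNormedType.Exports.

Section Asymptotics.
Variable R : realType.

Lemma cvg_one_rate (u : nat -> R) (K : R) : 0 <= K ->
  (forall n, (0 < n)%N -> `|u n - 1| <= K / n%:R) -> u @ \oo --> (1 : R).
Proof.
move=> K_ge0 u_near; apply/cvgrPdist_le => e e_gt0; near=> n.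
rewrite distrC; apply: le_trans (u_near n _) _; first by near: n; apply: nbhs_infty_gt.
have n_gt0 : (0 < n%:R :> R) by rewrite ltr0n; near: n; apply: nbhs_infty_gt.
rewrite ler_pdivrMr // -ler_pdivrMl //.
apply: le_trans (ltW (archi_boundP _)) _; first by rewrite mulr_ge0 // invr_ge0 ltW.
by rewrite ler_nat; near: n; apply: nbhs_infty_ge.
Unshelve. all: by end_near.
Qed.

Lemma ratio_near_one (a e d : R) : 0 < e -> `|a - e| <= d -> `|a / e - 1| <= d / e.
Proof.
move=> e_gt0 a_near.
rewrite -[X in _ - X](divff (lt0r_neq0 e_gt0)) -mulrBl normf_div (gtr0_norm e_gt0).
by rewrite ler_wpM2r // invr_ge0 ltW.
Qed.

Lemma ratio_shift_near_one (b a e c d : R) : 0 <= b -> 0 < c -> 0 < e ->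
  `|a - e| <= d -> `|(b + a * c) / (b + e * c) - 1| <= d / e.
Proof.
move=> b_ge0 c_gt0 e_gt0 a_near.
have den_gt0 : 0 < b + e * c by rewrite ltr_wpDl // mulr_gt0.
have -> : (b + a * c) / (b + e * c) - 1 = (a - e) * (c / (b + e * c)).
  by field; rewrite gt_eqF.
have frac_ge0 : 0 <= c / (b + e * c) by rewrite divr_ge0 ?ltW.
have frac : c / (b + e * c) <= e^-1.
  rewrite ler_pdivrMr // mulrDr mulrA mulVf ?mul1r ?lt0r_neq0 // lerDr.
  by rewrite mulr_ge0 // invr_ge0 ltW.
rewrite normrM (ger0_norm frac_ge0).
exact: ler_pM (normr_ge0 _) frac_ge0 a_near frac.
Qed.

End Asymptotics.

Theorem proposition3 (R : realType) :
  (* expected number of pick-n-swaps is exactly m + H_m - 2 *)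
  (forall m : nat, (0 < m)%N ->
     Eperm (fun pi : 'S_m => (n_picks (sweep_plan pi))%:R : R)
     = m%:R + @harmonic_number R m - 2)
  /\
  (* expected travel is (1 + o(1)) m^2 / 3 *)
  ((fun m : nat =>
      Eperm (fun pi : 'S_m => (travel (sweep_plan pi))%:R : R) / (m%:R ^+ 2 / 3))
     @ \oo --> (1 : R))
  /\
  (* hence T_LOR(m) ~ (m + H_m - 2) c_p + m^2 c_t / 3 *)
  (forall cp ct : R, 0 < cp -> 0 < ct ->
     (fun m : nat =>
        Eperm (fun pi : 'S_m => total_cost cp ct (sweep_plan pi))
        / ((m%:R + @harmonic_number R m - 2) * cp + m%:R ^+ 2 * ct / 3))
       @ \oo --> (1 : R)).
Proof.
have sq_gt0 n : (0 < n)%N -> 0 < n%:R ^+ 2 / 3 :> R.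
  by move=> n_gt0; rewrite divr_gt0 // exprn_gt0 // ltr0n.
have rate n : (0 < n)%N -> 2 * n%:R / (n%:R ^+ 2 / 3) = 6 / n%:R :> R.
  by move=> n_gt0; field; rewrite pnatr_eq0 -lt0n.
split; first exact: expected_n_picks.
split.
  apply: (cvg_one_rate (K := 6)) => // n n_gt0; rewrite -rate //.
  exact: ratio_near_one (sq_gt0 _ n_gt0) (expected_travel_near _ n_gt0).
move=> cp ct cp_gt0 ct_gt0; apply: (cvg_one_rate (K := 6)) => // n n_gt0.
rewrite /total_cost EpermD !EpermMr -rate // (mulrAC _ ct) -expected_n_picks //.
apply: ratio_shift_near_one (sq_gt0 _ n_gt0) (expected_travel_near _ n_gt0) => //.
apply: mulr_ge0 (ltW cp_gt0); rewrite -(Eperm_cst n 0).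
by apply: ler_Eperm => s; exact: ler0n.
Qed.
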